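(* Let $a=(a_n)_{n\ge1}$ be a real sequence with $\sum_{n=1}^\infty|a_n|<\infty$, and define $$(\tilde{\Gamma}a)_n=\frac{1}{n}\sum_{k=1}^n a_k-\frac{1}{n+1}\sum_{k=1}^\infty a_k,\qquad n\ge1.$$ If $\sum_{k=1}^\infty |a_k|\ln(k+1)<\infty$, then $\sum_{n=1}^\infty|(\tilde{\Gamma}a)_n|<\infty$. Conversely, if $a_n>0$ for all $n$ and $\sum_{n=1}^\infty|(\tilde{\Gamma}a)_n|<\infty$, then $\sum_{k=1}^\infty a_k\ln(k+1)<\infty$. *)

From Stdlib Require Import Reals.
From Coquelicot Require Import Coquelicot.
Open Scope R_scope.

(* A real sequence (a_n)_{n>=1} is modelled as a : nat -> R; the value a 0 is
   irrelevant (never used).  sum_{k=1}^{oo} b_k converges absolutely is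
   ex_series (fun j => Rabs (b (S j))). *)

Definition psum1 (a : nat -> R) (n : nat) : R :=
  match n with
  | O => 0
  | S m => sum_n (fun j => a (S j)) m
  end.

Definition fsum1 (a : nat -> R) : R := Series (fun j => a (S j)).

Definition GammaT (a : nat -> R) (n : nat) : R :=
  psum1 a n / INR n - fsum1 a / INR (S n).

(* Write b_j = a_{j+1} and t_n = sum_{j >= n} b_j.  Then
   (Gamma a)_{i+1} = s_i / ((i+1)(i+2)) - t_{i+1} / (i+2) with s_i the partial
   sums; the first term is summable since sum 1/((i+1)(i+2)) telescopes, so
   everything hinges on the series sum_i t_{i+1}/(i+2).  Abel summation turns
   it into sum_j b_j (H_{j+1} - 1), H the harmonic numbers, up to a nonnegative
   remainder, and H_{j+1} differs from ln(j+2) by at most 1. *)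

From Stdlib Require Import Reals Lra Lia.
From Coquelicot Require Import Coquelicot.
Open Scope R_scope.

Fixpoint harm (n : nat) : R :=
  match n with O => 0 | S m => harm m + / INR (S m) end.

Lemma INR_S_gt0 (n : nat) : 0 < INR (S n).
Proof. rewrite S_INR; pose proof (pos_INR n); lra. Qed.

Lemma ln_1_plus_le (x : R) : -1 < x -> ln (1 + x) <= x.
Proof.
  intros Hx. rewrite <- (ln_exp x) at 2.
  apply ln_le; [lra | apply exp_ineq1_le].
Qed.

Lemma ln_S_le_harm (n : nat) : ln (INR n + 1) <= harm n.
Proof.
  induction n as [|n IH]; cbn [harm].
  - replace (INR 0 + 1) with 1 by (simpl; lra). rewrite ln_1; lra.
  - pose proof (pos_INR n). rewrite S_INR.
    replace (INR n + 1 + 1) with ((INR n + 1) * (1 + / (INR n + 1))) by (field; lra).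
    assert (0 < / (INR n + 1)) by (apply Rinv_0_lt_compat; lra).
    rewrite ln_mult by lra.
    pose proof (ln_1_plus_le (/ (INR n + 1))). lra.
Qed.

Lemma harm_S_sub1_le_ln (n : nat) : harm (S n) - 1 <= ln (INR (S n)).
Proof.
  induction n as [|n IH]; cbn [harm] in *.
  - simpl. replace (0 + / 1 - 1) with 0 by field. rewrite ln_1; lra.
  - pose proof (pos_INR n). rewrite !S_INR in *.
    assert (Hinv : 0 < / (INR n + 1 + 1) < 1).
    { split; [apply Rinv_0_lt_compat; lra |].
      rewrite <- Rinv_1. apply Rinv_lt_contravar; lra. }
    assert (ln (INR n + 1) = ln (INR n + 1 + 1) + ln (1 + - / (INR n + 1 + 1))).
    { rewrite <- ln_mult by lra. f_equal. field. lra. }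
    pose proof (ln_1_plus_le (- / (INR n + 1 + 1))). lra.
Qed.

Lemma harm_le (m n : nat) : (m <= n)%nat -> harm m <= harm n.
Proof.
  induction 1 as [|n _ IH]; [lra |]. cbn [harm].
  pose proof (Rinv_0_lt_compat _ (INR_S_gt0 n)). lra.
Qed.

Lemma harm_S_ge1 (n : nat) : 1 <= harm (S n).
Proof.
  replace 1 with (harm 1) by (simpl; field).
  apply harm_le. lia.
Qed.

Lemma ex_series_bounded_nonneg (u : nat -> R) (M : R) :
  (forall n, 0 <= u n) -> (forall n, sum_f_R0 u n <= M) -> ex_series u.
Proof.
  intros Hu HM.
  destruct (ex_finite_lim_seq_incr (sum_n u) M) as [l Hl].
  - intros n. rewrite !sum_n_Reals, tech5. specialize (Hu (S n)). lra.
  - intros n. rewrite sum_n_Reals. apply HM.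
  - exists l. exact Hl.
Qed.

Lemma ex_series_Rle (u v : nat -> R) :
  (forall n, 0 <= u n <= v n) -> ex_series v -> ex_series u.
Proof.
  intros Huv. apply (@ex_series_le R_AbsRing R_CompleteNormedModule).
  intros n. change (norm (u n)) with (Rabs (u n)).
  specialize (Huv n). rewrite Rabs_pos_eq; lra.
Qed.

Lemma Series_nonneg (u : nat -> R) :
  (forall n, 0 <= u n) -> ex_series u -> 0 <= Series u.
Proof.
  intros Hu Ex. rewrite <- (Rmult_0_l (Series u)), <- Series_scal_l.
  apply Series_le; [| exact Ex]. intros n. specialize (Hu n). lra.
Qed.

Lemma sum_inv_mul_succ (n : nat) :
  sum_f_R0 (fun i => / (INR (S i) * INR (S (S i)))) n = 1 - / INR (S (S n)).
Proof.
  induction n as [|n IH].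
  - simpl. field.
  - rewrite tech5, IH.
    pose proof (INR_S_gt0 n). rewrite (S_INR (S (S n))), (S_INR (S n)). field. lra.
Qed.

Lemma ex_series_inv_mul_succ : ex_series (fun i => / (INR (S i) * INR (S (S i)))).
Proof.
  apply (ex_series_bounded_nonneg _ 1).
  - intros i. left. apply Rinv_0_lt_compat, Rmult_lt_0_compat; apply INR_S_gt0.
  - intros n. rewrite sum_inv_mul_succ.
    pose proof (Rinv_0_lt_compat _ (INR_S_gt0 (S n))). lra.
Qed.

Definition tail (b : nat -> R) (n : nat) : R := Series (fun j => b (n + j)%nat).

Lemma sum_tail_div_S (t b : nat -> R) :
  (forall N, t N = b N + t (S N)) -> forall n,
  sum_f_R0 (fun i => t (S i) / INR (S (S i))) n =
  t (S n) * (harm (S (S n)) - 1) + sum_f_R0 (fun j => b j * (harm (S j) - 1)) n.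
Proof.
  intros Ht n. induction n as [|n IH].
  - simpl. field.
  - rewrite tech5, IH, tech5, (Ht (S n)).
    change (harm (S (S (S n)))) with (harm (S (S n)) + / INR (S (S (S n)))).
    pose proof (INR_S_gt0 (S (S n))). field. lra.
Qed.

Section Summable.

Variable u : nat -> R.
Hypothesis u_summable : ex_series u.

Lemma ex_series_tail (n : nat) : ex_series (fun j => u (n + j)%nat).
Proof. apply ex_series_incr_n. exact u_summable. Qed.

Lemma tail_S (n : nat) : tail u n = u n + tail u (S n).
Proof.
  unfold tail. rewrite Series_incr_1 by apply ex_series_tail.
  rewrite Nat.add_0_r. f_equal. apply Series_ext. intros j. f_equal. lia.
Qed.

Lemma Series_sum_tail (n : nat) : Series u = sum_f_R0 u n + tail u (S n).
Proof. rewrite (Series_incr_n u (S n)); auto with arith. Qed.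

Hypothesis u_ge0 : forall n, 0 <= u n.

Lemma tail_ge0 (n : nat) : 0 <= tail u n.
Proof. apply Series_nonneg; [intros; apply u_ge0 | apply ex_series_tail]. Qed.

Lemma sum_f_R0_le_Series (n : nat) : sum_f_R0 u n <= Series u.
Proof. rewrite (Series_sum_tail n). pose proof (tail_ge0 (S n)). lra. Qed.

End Summable.

Lemma GammaT_S_eq (a : nat -> R) (i : nat) : ex_series (fun j => a (S j)) ->
  GammaT a (S i) =
  sum_f_R0 (fun j => a (S j)) i / (INR (S i) * INR (S (S i)))
  - tail (fun j => a (S j)) (S i) / INR (S (S i)).
Proof.
  intros Ex. unfold GammaT, fsum1, psum1.
  rewrite sum_n_Reals, (Series_sum_tail _ Ex i).
  pose proof (INR_S_gt0 i). pose proof (INR_S_gt0 (S i)).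
  rewrite (S_INR (S i)) in *. field. lra.
Qed.

Section HarmonicWeight.

Variable b : nat -> R.
Hypothesis b_ge0 : forall n, 0 <= b n.
Hypothesis b_summable : ex_series b.

Let w (j : nat) : R := b j * (harm (S j) - 1).

Lemma harm_weight_ge0 (j : nat) : 0 <= w j.
Proof. apply Rmult_le_pos; [apply b_ge0 | pose proof (harm_S_ge1 j); lra]. Qed.

(* [harm] is nondecreasing, so the weight of every term of the tail is at
   least that of its first term. *)
Lemma tail_mul_harm_le (n : nat) :
  ex_series w -> tail b n * (harm (S n) - 1) <= tail w n.
Proof.
  intros Exw. unfold tail. rewrite Rmult_comm, <- Series_scal_l.
  apply Series_le; [| apply ex_series_incr_n, Exw].
  intros j. pose proof (harm_S_ge1 n). pose proof (b_ge0 (n + j)).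
  pose proof (harm_le (S n) (S (n + j)) ltac:(lia)). unfold w.
  split; [apply Rmult_le_pos | rewrite Rmult_comm; apply Rmult_le_compat_l]; lra.
Qed.

Lemma ex_series_tail_div_iff :
  ex_series (fun i => tail b (S i) / INR (S (S i))) <-> ex_series w.
Proof.
  pose proof (sum_tail_div_S (tail b) b (tail_S b b_summable)) as Abel.
  fold w in Abel.
  assert (Hrem : forall n, 0 <= tail b (S n) * (harm (S (S n)) - 1)).
  { intros n. apply Rmult_le_pos; [apply tail_ge0; assumption |].
    pose proof (harm_S_ge1 (S n)); lra. }
  assert (Hdiv : forall i, 0 <= tail b (S i) / INR (S (S i))).
  { intros i. apply Rdiv_le_0_compat; [apply tail_ge0; assumption | apply INR_S_gt0]. }
  split; intros Ex.
  - apply (ex_series_bounded_nonneg _ (Series (fun i => tail b (S i) / INR (S (S i))))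
      harm_weight_ge0).
    intros n. pose proof (sum_f_R0_le_Series _ Ex Hdiv n).
    specialize (Hrem n). specialize (Abel n). lra.
  - apply (ex_series_bounded_nonneg _ (Series w) Hdiv). intros n.
    rewrite Abel, (Series_sum_tail w Ex n).
    pose proof (tail_mul_harm_le (S n) Ex). lra.
Qed.

Lemma ex_series_harm_weight_iff_ln :
  ex_series w <-> ex_series (fun j => b j * ln (INR (S j) + 1)).
Proof.
  assert (Hln : forall j, 0 <= ln (INR (S j) + 1)).
  { intros j. rewrite <- ln_1. apply ln_le; [lra |]. pose proof (INR_S_gt0 j); lra. }
  split; intros Ex.
  - apply (ex_series_Rle _ (fun j => w j + b j)); [| apply (ex_series_plus _ _ Ex b_summable)].
    intros j. pose proof (ln_S_le_harm (S j)). pose proof (b_ge0 j). pose proof (Hln j).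
    unfold w. split; nra.
  - refine (ex_series_Rle _ _ _ Ex).
    intros j. pose proof (harm_S_sub1_le_ln j). pose proof (b_ge0 j).
    assert (ln (INR (S j)) <= ln (INR (S j) + 1)) by (apply ln_le; [apply INR_S_gt0 | lra]).
    split; [apply harm_weight_ge0 | unfold w; nra].
Qed.

End HarmonicWeight.

Lemma Rabs_tail_le (u : nat -> R) (n : nat) :
  ex_series (fun j => Rabs (u j)) -> Rabs (tail u n) <= tail (fun j => Rabs (u j)) n.
Proof. intros Ex. apply Series_Rabs, (ex_series_tail _ Ex). Qed.

Lemma ex_series_div_mul_succ (c : R) :
  ex_series (fun i => c / (INR (S i) * INR (S (S i)))).
Proof. exact (ex_series_scal_l c _ ex_series_inv_mul_succ). Qed.

Section GammaT_bounds.

Variable a : nat -> R.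
Hypothesis a_abs_summable : ex_series (fun j => Rabs (a (S j))).

Let B : R := Series (fun j => Rabs (a (S j))).
Let t (n : nat) : R := tail (fun j => a (S j)) n.

Lemma Rabs_GammaT_S_add_tail_le (i : nat) :
  Rabs (GammaT a (S i) + t (S i) / INR (S (S i))) <= B / (INR (S i) * INR (S (S i))).
Proof.
  rewrite GammaT_S_eq by apply ex_series_Rabs, a_abs_summable.
  replace (_ - _ + _) with (sum_f_R0 (fun j => a (S j)) i / (INR (S i) * INR (S (S i))))
    by (unfold t; ring).
  assert (Hxy : 0 < INR (S i) * INR (S (S i))) by (apply Rmult_lt_0_compat; apply INR_S_gt0).
  unfold Rdiv. rewrite Rabs_mult, (Rabs_pos_eq (/ _)) by (left; apply Rinv_0_lt_compat, Hxy).
  apply Rmult_le_compat_r; [left; apply Rinv_0_lt_compat, Hxy |].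
  eapply Rle_trans; [apply sum_f_R0_triangle |].
  apply sum_f_R0_le_Series; [exact a_abs_summable | intros; apply Rabs_pos].
Qed.

Lemma Rabs_GammaT_S_le (i : nat) :
  Rabs (GammaT a (S i)) <=
  B / (INR (S i) * INR (S (S i))) + tail (fun j => Rabs (a (S j))) (S i) / INR (S (S i)).
Proof.
  pose proof (Rabs_GammaT_S_add_tail_le i).
  pose proof (Rabs_tail_le (fun j => a (S j)) (S i) a_abs_summable).
  pose proof (INR_S_gt0 (S i)).
  assert (Rabs (t (S i) / INR (S (S i))) <= tail (fun j => Rabs (a (S j))) (S i) / INR (S (S i))).
  { rewrite Rabs_div, (Rabs_pos_eq (INR _)) by lra.
    apply Rmult_le_compat_r; [left; apply Rinv_0_lt_compat |]; assumption. }
  pose proof (Rabs_triang (GammaT a (S i) + t (S i) / INR (S (S i))) (- (t (S i) / INR (S (S i))))).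
  rewrite Rabs_Ropp in *.
  replace (GammaT a (S i) + t (S i) / INR (S (S i)) + - (t (S i) / INR (S (S i))))
    with (GammaT a (S i)) in * by ring.
  lra.
Qed.

Lemma tail_div_le_Rabs_GammaT_S (i : nat) :
  t (S i) / INR (S (S i)) <= B / (INR (S i) * INR (S (S i))) + Rabs (GammaT a (S i)).
Proof.
  pose proof (Rabs_GammaT_S_add_tail_le i).
  pose proof (Rle_abs (GammaT a (S i) + t (S i) / INR (S (S i)))).
  pose proof (Rle_abs (- GammaT a (S i))). rewrite Rabs_Ropp in *.
  lra.
Qed.

End GammaT_bounds.

Theorem theorem3p4 (a : nat -> R) :
  ex_series (fun j => Rabs (a (S j))) ->
  ((ex_series (fun j => Rabs (a (S j)) * ln (INR (S j) + 1)) ->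
    ex_series (fun j => Rabs (GammaT a (S j))))
   /\
   ((forall n : nat, (1 <= n)%nat -> 0 < a n) ->
    ex_series (fun j => Rabs (GammaT a (S j))) ->
    ex_series (fun j => a (S j) * ln (INR (S j) + 1)))).
Proof.
  intros Exa. set (B := Series (fun j => Rabs (a (S j)))).
  split.
  - intros Hln.
    assert (Habs : forall j, 0 <= Rabs (a (S j))) by (intros; apply Rabs_pos).
    apply (ex_series_harm_weight_iff_ln _ Habs Exa), (ex_series_tail_div_iff _ Habs Exa) in Hln.
    apply (ex_series_Rle _ _ (fun i => conj (Rabs_pos _) (Rabs_GammaT_S_le a Exa i))).
    exact (ex_series_plus _ _ (ex_series_div_mul_succ B) Hln).
  - intros Hpos HG.
    assert (Hge0 : forall j, 0 <= a (S j)) by (intros; left; apply Hpos; lia).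
    assert (Exb : ex_series (fun j => a (S j))) by (apply ex_series_Rabs, Exa).
    apply (ex_series_harm_weight_iff_ln _ Hge0 Exb), (ex_series_tail_div_iff _ Hge0 Exb).
    refine (ex_series_Rle _ _ _ (ex_series_plus _ _ (ex_series_div_mul_succ B) HG)).
    intros i. split.
    + apply Rdiv_le_0_compat; [apply tail_ge0; assumption | apply INR_S_gt0].
    + exact (tail_div_le_Rabs_GammaT_S a Exa i).
Qed.
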